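(* Let $v,j,n$ be positive integers, $\mathcal{V}=\{1,\dots,v\}$, $\mathcal{X}=2^{\mathcal{V}}$, $\mathcal{Y}=\binom{\mathcal{V}}{j}\times\{0,1\}^j$, $p$ a probability distribution on $\mathcal{X}$ and $u:\mathcal{X}\times2^{\mathcal{X}}\to\mathbb{R}^+$ semantic weights. For reports $X^n=(X(1),\dots,X(n))$ i.i.d. with law $p$, the minimum, over all summarizers $s\in\mathcal{P}(\mathcal{Y}|\mathcal{X}^n)$ of length $j$ (with $Y\sim s_{X^n}(y)$), of the semantic loss $\ell(X(1);Y\mid u)$ equals $$\sum_{x\in\mathcal{X}}p(x)\min_{y\in\mathcal{Y}}\sum_{\mathcal{W}\subseteq\mathcal{X}}u(x,\mathcal{W})\bigl(1-i_y(\mathcal{W})\bigr),$$ where $i_y(\mathcal{W})=\sum_{x\in\mathcal{W}}i_y(x)$.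
   Context: Reports are elements $x\in\mathcal{X}=2^{\mathcal{V}}$, equivalently binary vectors $(x_1,\dots,x_v)$. A summary is $y=(\hat y,\tilde y)$ with $\hat y\subseteq\mathcal{V}$, $|\hat y|=j$, and $\tilde y\in\{0,1\}^j$; write $y\subset x$ if $\tilde y$ equals the restriction of $x$ to the coordinates in $\hat y$. Let $\mathcal{X}(y)=\{x\in\mathcal{X}: y\subset x\}$ and $p(A)=\sum_{a\in A}p(a)$. The summary interpretation is $i_y(x)=1_{\mathcal{X}(y)}(x)\,p(x)/p(\mathcal{X}(y))$. Semantic weights are any $u:\mathcal{X}\times2^{\mathcal{X}}\to\mathbb{R}^+$ with $u(x,\mathcal{W})=0$ whenever $x\notin\mathcal{W}$. A summarizer of length $j$ is a conditional distribution $s\in\mathcal{P}(\mathcal{Y}|\mathcal{X}^n)$, producing $Y\sim s_{X^n}(y)$. For $\mathcal{W}\subseteq\mathcal{X}$, $\mathcal{P}(\mathcal{W}|\mathcal{X})$ is the set of conditional distributions on $\mathcal{X}$ given an element of $\mathcal{X}$ supported on $\mathcal{W}$. The semantic loss is $$\ell(X;Y\mid u)=\mathbb{E}\Bigl[\sum_{\mathcal{W}\subseteq\mathcal{X}}\inf_{q\in\mathcal{P}(\mathcal{W}|\mathcal{X})} u(X,\mathcal{W})\sum_{x\in\mathcal{X}}\tfrac12\bigl|q_X(x)-i_Y(x)\bigr|\Bigr].$$ *)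

From HB Require Import structures.
From mathcomp Require Import all_boot all_order all_algebra.
From mathcomp Require Import all_classical all_reals.
Set Implicit Arguments. Unset Strict Implicit. Unset Printing Implicit Defensive.
Import Order.TTheory GRing.Theory Num.Theory.
Local Open Scope ring_scope.
Local Open Scope classical_set_scope.

(* Reports: binary vectors (x_1,...,x_v), i.e. elements of 2^V, V = {0..v-1}. *)
Definition report (v : nat) := {ffun 'I_v -> bool}.

(* Summaries y = (yhat, ytilde): yhat a j-subset of V, ytilde in {0,1}^j. *)
Definition summary (v j : nat) :=
  ({yh : {set 'I_v} | #|yh| == j} * {ffun 'I_j -> bool})%type.

(* y \subset x : ytilde is the restriction of x to the coordinates of yhat,
   listed in increasing order. *)
Definition subsum (v j : nat) (y : summary v j) (x : report v) : bool :=
  [seq x i | i <- enum (val y.1)] == [seq y.2 k | k <- enum 'I_j].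

Definition Xof (v j : nat) (y : summary v j) : {set report v} :=
  [set x | subsum y x].

Definition pmass (R : realType) (v : nat) (p : report v -> R)
  (A : {set report v}) : R := \sum_(x in A) p x.

Definition is_dist (R : realType) (T : finType) (p : T -> R) : Prop :=
  (forall x, 0 <= p x) /\ \sum_x p x = 1.

Definition interp (R : realType) (v j : nat) (p : report v -> R)
  (y : summary v j) (x : report v) : R :=
  if x \in Xof y then p x / pmass p (Xof y) else 0.

Definition interpW (R : realType) (v j : nat) (p : report v -> R)
  (y : summary v j) (W : {set report v}) : R :=
  \sum_(x in W) interp p y x.

Definition sem_weights (R : realType) (v : nat)
  (u : report v -> {set report v} -> R) : Prop :=
  (forall x (W : {set report v}), 0 <= u x W) /\
  (forall x (W : {set report v}), x \notin W -> u x W = 0).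

Definition cond_dists (R : realType) (v : nat) (W : {set report v})
  : set (report v -> report v -> R) :=
  [set q | (forall x0 x, 0 <= q x0 x) /\ (forall x0, \sum_x q x0 x = 1) /\
           (forall x0 x, x \notin W -> q x0 x = 0)].

Definition tvd (R : realType) (v : nat) (r1 r2 : report v -> R) : R :=
  \sum_x 2^-1 * `|r1 x - r2 x|.

(* inf_{q in P(W|X)} u(x,W) sum_x' 1/2 |q_x(x') - i_y(x')|
   (mathcomp-analysis [inf] of the empty set is 0) *)
Definition inner (R : realType) (v j : nat) (p : report v -> R)
  (u : report v -> {set report v} -> R) (x : report v)
  (W : {set report v}) (y : summary v j) : R :=
  inf [set u x W * tvd (q x) (interp p y) | q in @cond_dists R v W].

Definition is_summarizer (R : realType) (v j n : nat)
  (s : {ffun 'I_n -> report v} -> summary v j -> R) : Prop :=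
  forall xs, is_dist (s xs).

(* semantic loss l(X(1); Y | u) with X^n iid ~ p, Y ~ s_{X^n} *)
Definition sem_loss (R : realType) (v j n : nat) (hn : (0 < n)%N)
  (p : report v -> R) (u : report v -> {set report v} -> R)
  (s : {ffun 'I_n -> report v} -> summary v j -> R) : R :=
  \sum_(xs : {ffun 'I_n -> report v})
     (\prod_(k < n) p (xs k)) *
     \sum_(y : summary v j) s xs y *
        \sum_(W : {set report v}) inner p u (xs (Ordinal hn)) W y.

Definition opt_value (R : realType) (v j : nat) (p : report v -> R)
  (u : report v -> {set report v} -> R) : R :=
  \sum_(x : report v) p x *
     inf (range (fun y : summary v j =>
        \sum_(W : {set report v}) u x W * (1 - interpW p y W))).

(* The semantic loss only involves the first report X(1) and, for each
   W, an infimum over distributions q supported on W of the total variation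
   to i_y.  That infimum equals the i_y-mass outside W, i.e. 1 - i_y(W): it is
   a lower bound for any such q, and it is attained by moving the outside mass
   of i_y onto one point of W.  The loss of a summarizer is therefore an
   average, over X(1) ~ p and Y, of the cost sum_W u(X(1),W) (1 - i_Y(W)), which
   is at least its minimum over y, with equality for the deterministic
   summarizer outputting a minimizer for X(1). *)

From mathcomp Require Import all_boot all_order all_algebra.
From mathcomp Require Import all_classical all_reals.
From mathcomp Require Import ring lra.
Set Implicit Arguments. Unset Strict Implicit. Unset Printing Implicit Defensive.
Import Order.TTheory GRing.Theory Num.Theory.
Local Open Scope ring_scope.
Local Open Scope classical_set_scope.

Lemma inf_attained (R : realType) (E : set R) (m : R) :
  E m -> lbound E m -> inf E = m.
Proof.
move=> Em lbm; apply/le_anti/andP; split; first exact: (ge_inf (ex_intro _ m lbm)).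
by apply: lb_le_inf => //; exists m.
Qed.

Lemma sum_iid_coord (R : realType) (T : finType) (n : nat) (i0 : 'I_n)
    (p h : T -> R) :
  \sum_x p x = 1 ->
  \sum_(xs : {ffun 'I_n -> T}) (\prod_k p (xs k)) * h (xs i0) =
  \sum_x p x * h x.
Proof.
move=> p1.
pose F (k : 'I_n) (x : T) := if k == i0 then p x * h x else p x.
have : \prod_k \sum_x F k x = \sum_(f : {ffun 'I_n -> T}) \prod_k F k (f k).
  exact: bigA_distr_bigA.
rewrite (bigD1 i0) //= {1}/F eqxx [X in _ * X]big1 ?mulr1; last first.
  by move=> k /negbTE k_i0; rewrite /F k_i0 p1.
move=> ->; apply: eq_bigr => xs _.
rewrite (bigD1 i0) //= [RHS](bigD1 i0) //= /F eqxx mulrAC.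
by congr (_ * _); apply: eq_bigr => k /negbTE ->.
Qed.

Section TotalVariation.
Variables (R : realType) (T : finType) (W : {set T}) (s : T -> R).
Hypotheses (s_ge0 : forall x, 0 <= s x) (s_sum1 : \sum_x s x = 1).

Lemma tv_ge_mass_setC (r : T -> R) :
  \sum_x r x = 1 -> (forall x, x \notin W -> r x = 0) ->
  \sum_(x | x \notin W) s x <= \sum_x 2^-1 * `|r x - s x|.
Proof.
move=> r_sum1 r_off.
rewrite -mulr_sumr [X in _ * X](bigID (mem W)) /=.
have -> : \sum_(x | x \notin W) `|r x - s x| = \sum_(x | x \notin W) s x.
  by apply: eq_bigr => x /r_off ->; rewrite sub0r normrN ger0_norm.
have rW : \sum_(x in W) r x = 1.
  by rewrite -r_sum1 [RHS](bigID (mem W)) /= [X in _ + X]big1 ?addr0.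
have sW : \sum_(x in W) s x = 1 - \sum_(x | x \notin W) s x.
  by rewrite -s_sum1 [X in X - _](bigID (mem W)) /= addrK.
have : \sum_(x | x \notin W) s x <= \sum_(x in W) `|r x - s x|.
  apply: le_trans (ler_norm_sum _ _ _).
  by rewrite sumrB rW sW opprB addrC subrK ler_norm.
lra.
Qed.

(* Put s back on W and the mass s puts outside W on the single point w. *)
Lemma tv_eq_mass_setC (w : T) : w \in W ->
  exists2 r : T -> R,
    [/\ forall x, 0 <= r x, \sum_x r x = 1 & forall x, x \notin W -> r x = 0] &
    \sum_x 2^-1 * `|r x - s x| = \sum_(x | x \notin W) s x.
Proof.
move=> wW; set m := \sum_(x | x \notin W) s x.
have m_ge0 : 0 <= m by apply: sumr_ge0.
pose r x := if x \in W then s x + (x == w)%:R * m else 0.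
have mass_at_w : \sum_(x in W) (x == w)%:R * m = m.
  rewrite (bigD1 w) //= eqxx mul1r big1 ?addr0 //.
  by move=> x /andP[_ /negbTE ->]; rewrite mul0r.
exists r; first split.
- by move=> x; rewrite /r; case: ifP => // _; rewrite addr_ge0 ?mulr_ge0.
- rewrite (bigID (mem W)) /= [X in _ + X]big1 => [|x /negbTE]; last by rewrite /r => ->.
  rewrite addr0 (eq_bigr (fun x => s x + (x == w)%:R * m)) => [|x]; last by rewrite /r => ->.
  by rewrite big_split /= mass_at_w -s_sum1 [RHS](bigID (mem W)).
- by move=> x /negbTE; rewrite /r => ->.
rewrite -mulr_sumr [X in _ * X](bigID (mem W)) /=.
rewrite (eq_bigr (fun x => (x == w)%:R * m)) => [|x xW]; last first.
  by rewrite /r xW addrAC subrr add0r ger0_norm ?mulr_ge0.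
rewrite mass_at_w (eq_bigr s) => [|x /negbTE xW]; last first.
  by rewrite /r xW sub0r normrN ger0_norm.
rewrite -/m; lra.
Qed.

End TotalVariation.

Lemma sum_dist_ge_min (R : realType) (T : finType) (s F : T -> R) (m : R) :
  is_dist s -> (forall t, m <= F t) -> m <= \sum_t s t * F t.
Proof.
move=> [s_ge0 s_sum1] m_le; rewrite -[m]mul1r -s_sum1 mulr_suml.
by apply: ler_sum => t _; apply: ler_wpM2l.
Qed.

Lemma sum_dirac (R : realType) (T : finType) (F : T -> R) (t0 : T) :
  \sum_t (t == t0)%:R * F t = F t0.
Proof.
rewrite (bigD1 t0) //= eqxx mul1r big1 ?addr0 //.
by move=> t /negbTE ->; rewrite mul0r.
Qed.

Lemma is_dist_dirac (R : realType) (T : finType) (t0 : T) :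
  is_dist (fun t => (t == t0)%:R : R).
Proof.
split=> [t|]; first exact: ler0n.
by rewrite -[RHS](@sum_dirac R T (fun=> 1) t0); apply: eq_bigr => t _; rewrite mulr1.
Qed.

Section SemanticLoss.
Variables (R : realType) (v j : nat) (p : report v -> R).
Hypotheses (hp : is_dist p) (hpy : forall y : summary v j, 0 < pmass p (Xof y)).
Variables (u : report v -> {set report v} -> R) (hu : sem_weights u).

Lemma interp_ge0 (y : summary v j) (x : report v) : 0 <= interp p y x.
Proof.
have [p_ge0 _] := hp.
by rewrite /interp; case: ifP => // _; rewrite divr_ge0 // ltW.
Qed.

Lemma sum_interp (y : summary v j) : \sum_x interp p y x = 1.
Proof.
rewrite /interp -big_mkcond /= -mulr_suml.
by rewrite -/(pmass p (Xof y)) mulfV // gt_eqF.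
Qed.

Lemma interp_mass_setC (y : summary v j) (W : {set report v}) :
  \sum_(x | x \notin W) interp p y x = 1 - interpW p y W.
Proof.
by rewrite -(sum_interp y) [X in X - _](bigID (mem W)) /= /interpW addrAC subrr add0r.
Qed.

Lemma inner_eq (x : report v) (W : {set report v}) (y : summary v j) :
  inner p u x W y = u x W * (1 - interpW p y W).
Proof.
have [u_ge0 u_off] := hu.
case: (set_0Vmem W) => [-> | [w wW]].
  rewrite u_off ?inE // mul0r /inner.
  (* no distribution is supported on the empty set, and [inf set0 = 0] *)
  suff -> : @cond_dists R v finset.set0 = set0 by rewrite image_set0 inf0.
  apply/seteqP; split => // q [_ [q_sum1 q_off]].
  move: (q_sum1 x); rewrite big1 => [/eqP|x' _]; last by rewrite q_off ?inE.
  by rewrite eq_sym oner_eq0.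
have [r [r_ge0 r_sum1 r_off] tv_r] :=
  tv_eq_mass_setC (interp_ge0 y) (sum_interp y) wW.
apply: inf_attained.
  exists (fun=> r); first by split=> [//|]; split.
  by rewrite /tvd tv_r interp_mass_setC.
move=> _ [q [_ [q_sum1 q_off]] <-].
rewrite ler_wpM2l // -interp_mass_setC.
exact: tv_ge_mass_setC (interp_ge0 y) (sum_interp y) _ (q_sum1 x) (q_off x).
Qed.

Definition summary_cost (x : report v) (y : summary v j) : R :=
  \sum_W u x W * (1 - interpW p y W).

Lemma sem_loss_eq (n : nat) (hn : (0 < n)%N)
    (s : {ffun 'I_n -> report v} -> summary v j -> R) :
  sem_loss hn p u s =
  \sum_(xs : {ffun 'I_n -> report v}) (\prod_k p (xs k)) *
    \sum_y s xs y * summary_cost (xs (Ordinal hn)) y.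
Proof.
apply: eq_bigr => xs _; congr (_ * _); apply: eq_bigr => y _.
by congr (_ * _); apply: eq_bigr => W _; rewrite inner_eq.
Qed.

Variable y0 : summary v j.

Definition best_summary (x : report v) : summary v j :=
  [arg min_(y < y0) summary_cost x y]%O.

Lemma best_summary_min x y : summary_cost x (best_summary x) <= summary_cost x y.
Proof. by rewrite /best_summary; case: arg_minP => // y' _; apply. Qed.

Lemma opt_value_eq : opt_value j p u = \sum_x p x * summary_cost x (best_summary x).
Proof.
apply: eq_bigr => x _; congr (_ * _); apply: inf_attained; first by exists (best_summary x).
by move=> _ [y _ <-]; apply: best_summary_min.
Qed.

End SemanticLoss.

Lemma card_widen_ord_image (j v : nat) (hjv : (j <= v)%N) :
  #|[set widen_ord hjv i | i : 'I_j]| == j.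
Proof.
by rewrite card_imset ?cardsT ?card_ord // => a b /(congr1 val) /= /val_inj.
Qed.

Definition summary_witness (v j : nat) (hjv : (j <= v)%N) : summary v j :=
  (exist (fun yh : {set 'I_v} => #|yh| == j) _ (card_widen_ord_image hjv),
   [ffun=> false]).

Local Close Scope classical_set_scope.

Theorem corollary1 (R : realType) (v j n : nat)
  (hv : (0 < v)%N) (hj : (0 < j)%N) (hn : (0 < n)%N) (hjv : (j <= v)%N)
  (p : report v -> R) (hp : is_dist p)
  (hpy : forall y : summary v j, 0 < pmass p (Xof y))
  (u : report v -> {set report v} -> R) (hu : sem_weights u) :
  (forall s : {ffun 'I_n -> report v} -> summary v j -> R,
      is_summarizer s -> opt_value j p u <= sem_loss hn p u s) /\
  (exists s : {ffun 'I_n -> report v} -> summary v j -> R,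
      is_summarizer s /\ sem_loss hn p u s = opt_value j p u).
Proof.
have [p_ge0 p_sum1] := hp.
set ym := best_summary p u (summary_witness hjv).
have opt_iid : opt_value j p u = \sum_(xs : {ffun 'I_n -> report v})
    (\prod_k p (xs k)) * summary_cost p u (xs (Ordinal hn)) (ym (xs (Ordinal hn))).
  rewrite (opt_value_eq _ _ (summary_witness hjv)).
  by rewrite (sum_iid_coord (Ordinal hn) (fun x => summary_cost p u x (ym x))).
split=> [s s_dist|].
  rewrite opt_iid (sem_loss_eq hp hpy hu); apply: ler_sum => xs _.
  apply: ler_wpM2l; first exact: prodr_ge0.
  exact: sum_dist_ge_min (s_dist xs) (best_summary_min _ _ _ _).
exists (fun xs y => (y == ym (xs (Ordinal hn)))%:R); split.
  by move=> xs; apply: is_dist_dirac.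
by rewrite opt_iid (sem_loss_eq hp hpy hu); apply: eq_bigr => xs _; rewrite sum_dirac.
Qed.
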